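(* Consider a sequence of probability distributions $\{Q^k(x,E,\theta):E\in\mathcal{E},x\in\mathcal{X}_E,\theta\in\{\theta_0,\theta_1\}\}_{k\ge1}$ satisfying the low-informativeness condition; in particular $Q^k(x,E,\theta)\to\mathcal{Q}(x,E)$ for $\theta=\theta_0,\theta_1$. For each $k$, let $\mathcal{Q}^k(\cdot,E)$ be the corresponding solution of $$\min_{\mathcal{Q}'\ge0}\ \max_{\theta\in\{\theta_0,\theta_1\}}\ \max_{x\in\mathcal{X}_E}\Big|\frac{Q^k(x,E,\theta)}{\mathcal{Q}'(x,E)}-1\Big|\quad\text{subject to}\quad\sum_{x\in\mathcal{X}_E}\mathcal{Q}'(x,E)=1$$ for every $E\in\mathcal{E}$. Then $\mathcal{Q}^k(x,E)\to\mathcal{Q}(x,E)$ as $k\to\infty$ for all $E\in\mathcal{E}$ and $x\in\mathcal{X}_E$.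
   Context: $\mathcal{E}$ is a finite set of experiments, each $E$ with a finite outcome set $\mathcal{X}_E$. For each $k$, $Q^k(\cdot,E,\theta)$ is a probability distribution on $\mathcal{X}_E$ (outcome probabilities under $\Theta=\theta$). Low-informativeness condition: for each $E\in\mathcal{E}$ there is a probability distribution $\mathcal{Q}(\cdot,E)$ on $\mathcal{X}_E$ such that, for $\theta\in\{\theta_0,\theta_1\}$, $\sqrt{k}\big(Q^k(x,E,\theta)/\mathcal{Q}(x,E)-1\big)\to\alpha(x,E,\theta)$ with $\sum_x\alpha(x,E,\theta)\mathcal{Q}(x,E)=0$. *)

From HB Require Import structures.
From mathcomp Require Import all_boot all_order all_algebra.
From mathcomp Require Import all_classical all_reals all_analysis.
Set Implicit Arguments. Unset Strict Implicit. Unset Printing Implicit Defensive.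
Import Order.TTheory GRing.Theory Num.Theory.
Local Open Scope ring_scope.

Definition is_distr (R : realType) (T : finType) (p : T -> R) : Prop :=
  (forall x, 0 <= p x) /\ \sum_(x : T) p x = 1.

(* |q / q' - 1| as an extended real; the ratio is undefined (taken as +oo)
   when q' = 0. *)
Definition ratio_dev (R : realType) (q q' : R) : \bar R :=
  if 0 < q' then (`| q / q' - 1 |)%:E else +oo%E.

(* Objective of the minimisation problem for one experiment:
   max_{theta in {theta0,theta1}} max_{x} |Q(x,theta)/Q'(x) - 1|.
   theta0 ~ false, theta1 ~ true. *)
Definition lowinf_obj (R : realType) (T : finType) (Q : T -> bool -> R)
    (Q' : T -> R) : \bar R :=
  \big[Order.max/-oo%E]_(th : bool) \big[Order.max/-oo%E]_(x : T)
     ratio_dev (Q x th) (Q' x).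

From HB Require Import structures.
From mathcomp Require Import all_boot all_order all_algebra.
From mathcomp Require Import all_classical all_reals all_analysis.
Import Order.TTheory GRing.Theory Num.Theory.
Import numFieldNormedType.Exports.
Local Open Scope classical_set_scope.
Local Open Scope ring_scope.

(* At the reference distribution calQ the objective of the k-th problem is
   O(1/sqrt k), so the optimal value is too.  An objective value d at a
   distribution P bounds |Q(x,theta) - P(x)| by d (as P(x) <= 1), and the
   triangle inequality through Q^k(x,theta) puts calQ^k(x) within 2d of
   calQ(x). *)

Section Limits.
Context {R : realType}.

Lemma cvgr_sqrtn : Num.sqrt (n%:R : R) @[n --> \oo] --> +oo.
Proof.
apply/cvgryPge => A; have /cvgryPge/(_ (A ^+ 2)) := @cvgr_idn R.
apply: filterS => n An; apply: le_trans (ler_norm A) _.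
by rewrite -sqrtr_sqr ler_sqrt.
Qed.

Lemma cvg0_sqrtnM (g : nat -> R) (a : R) :
  (fun k : nat => Num.sqrt k%:R * g k) @ \oo --> a -> g @ \oo --> 0.
Proof.
move=> ga.
have sqrt_gt0 : \forall k \near \oo, 0 < Num.sqrt (k%:R : R).
  by near=> k; rewrite sqrtr_gt0 ltr0n; near: k; exists 1%N.
have inv_sqrt0 : (Num.sqrt (k%:R : R))^-1 @[k --> \oo] --> 0.
  exact/(gtr0_cvgV0 sqrt_gt0)/cvgr_sqrtn.
rewrite -(mul0r a); apply: cvg_trans (cvgM inv_sqrt0 ga).
apply: near_eq_cvg; near=> k => /=.
by rewrite mulrA mulVf ?mul1r // gt_eqF //; near: k.
Unshelve. all: by end_near.
Qed.

Lemma denom_neq0_of_cvg0 {q : nat -> R} {c : R} :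
  (fun k : nat => q k / c - 1) @ \oo --> 0 -> c != 0.
Proof.
apply: contraPneq => -> q_cvg.
have cst_cvg : (cst (-1 : R)) @ \oo --> 0.
  apply: cvg_trans q_cvg; apply: near_eq_cvg.
  by near=> k; rewrite invr0 mulr0 sub0r.
have /cvgrPdist_lt/(_ 1 ltr01)/filter_ex[k] := cst_cvg.
by rewrite /= sub0r opprK normr1 ltxx.
Unshelve. all: by end_near.
Qed.

End Limits.

Section Distributions.
Context {R : realType} {T : finType}.

Lemma distr_le1 (p : T -> R) : is_distr p -> forall x, p x <= 1.
Proof.
by case=> p_ge0 p_sum1 x; rewrite -p_sum1 (bigD1 x) //= lerDl sumr_ge0.
Qed.

Lemma ratio_dev_le (q q' d : R) :
  (ratio_dev q q' <= d%:E)%E <-> 0 < q' /\ `|q / q' - 1| <= d.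
Proof.
rewrite /ratio_dev; case: ifP => [q'_gt0|q'_le0].
  by rewrite lee_fin; split=> [|[]].
by split=> [|[]]; rewrite ?leye_eq ?q'_le0.
Qed.

Lemma lowinf_obj_le (Q : T -> bool -> R) (Q' : T -> R) (d : R) :
  (lowinf_obj Q Q' <= d%:E)%E <->
  forall x th, 0 < Q' x /\ `|Q x th / Q' x - 1| <= d.
Proof.
rewrite /lowinf_obj; split=> [obj_le x th | dev_le].
  apply/ratio_dev_le; apply: le_trans obj_le.
  apply: le_trans (le_bigmax _ _ th).
  exact: (le_bigmax _ (fun y => ratio_dev (Q y th) (Q' y)) x).
apply: bigmax_le => [|th _]; first exact: leNye.
by apply: bigmax_le => [|x _]; [exact: leNye | exact/ratio_dev_le].
Qed.

Lemma dist_le_ratio_dev (a b : R) : 0 < b -> b <= 1 -> `|a - b| <= `|a / b - 1|.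
Proof.
move=> b_gt0 b_le1.
have -> : a - b = b * (a / b - 1).
  by rewrite mulrBr mulr1 mulrCA divff ?gt_eqF ?mulr1.
by rewrite normrM gtr0_norm // ler_piMl.
Qed.

Lemma lowinf_minimizer_close (Q : T -> bool -> R) (P P' : T -> R) (d : R) :
  is_distr P -> is_distr P' ->
  (lowinf_obj Q P' <= lowinf_obj Q P)%E -> (lowinf_obj Q P <= d%:E)%E ->
  forall x, `|P' x - P x| <= d *+ 2.
Proof.
move=> P_distr P'_distr P'_opt objP_le x.
have /lowinf_obj_le objP'_le := le_trans P'_opt objP_le.
have [P_gt0 devP] := (lowinf_obj_le _ _ _).1 objP_le x false.
have [P'_gt0 devP'] := objP'_le x false.
apply: le_trans (ler_distD (Q x false) _ _) _.
rewrite mulr2n distrC lerD //.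
  by apply: le_trans devP'; apply: dist_le_ratio_dev P'_gt0 _; exact: distr_le1.
by apply: le_trans devP; apply: dist_le_ratio_dev P_gt0 _; exact: distr_le1.
Qed.

End Distributions.

Theorem proposition8 (R : realType) (Exp : finType) (X : Exp -> finType)
    (Q : nat -> forall E : Exp, X E -> bool -> R)
    (calQ : forall E : Exp, X E -> R)
    (alpha : forall E : Exp, X E -> bool -> R)
    (calQk : nat -> forall E : Exp, X E -> R) :
  (* each Q^k(., E, theta) is a probability distribution on X_E *)
  (forall k E th, (0 < k)%N -> is_distr (fun x => Q k E x th)) ->
  (* low-informativeness condition *)
  (forall E, is_distr (calQ E)) ->
  (forall E x th,
     (fun k : nat => Num.sqrt (k%:R) * (Q k E x th / calQ E x - 1))
       @ \oo --> alpha E x th) ->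
  (forall E th, \sum_(x : X E) alpha E x th * calQ E x = 0) ->
  (* calQ^k(., E) solves the minimisation problem for each k >= 1 and E *)
  (forall k E, (0 < k)%N ->
     is_distr (calQk k E) /\
     forall Q' : X E -> R, is_distr Q' ->
       (lowinf_obj (Q k E) (calQk k E) <= lowinf_obj (Q k E) Q')%E) ->
  forall E x, (fun k : nat => calQk k E x) @ \oo --> calQ E x.
Proof.
move=> _ calQ_distr Q_dev _ calQk_opt E x.
have ratio_cvg0 y th : (fun k => Q k E y th / calQ E y - 1) @ \oo --> 0.
  exact: cvg0_sqrtnM (Q_dev E y th).
have calQ_gt0 y : 0 < calQ E y.
  by rewrite lt_def (denom_neq0_of_cvg0 (ratio_cvg0 y false)) (calQ_distr E).1.
apply/cvgrPdist_le => e e_gt0.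
have obj_small : \forall k \near \oo,
    (lowinf_obj (Q k E) (calQ E) <= (e / 2)%:E)%E.
  have /filter_forall : forall p : X E * bool, \forall k \near \oo,
      `|Q k E p.1 p.2 / calQ E p.1 - 1| <= e / 2.
    case=> y th; apply: cvgr0_norm_le; first exact: ratio_cvg0.
    by rewrite divr_gt0.
  by apply: filterS => k dev_small; apply/lowinf_obj_le => y th; split=> //;
    exact: (dev_small (y, th)).
near=> k.
have k_gt0 : (0 < k)%N by near: k; exists 1%N.
have [calQk_distr calQk_min] := calQk_opt k E k_gt0.
rewrite distrC (splitr e) -mulr2n.
apply: (lowinf_minimizer_close _ _ _ _ (calQ_distr E) calQk_distr).
- exact: calQk_min (calQ_distr E).
- by near: k.
Unshelve. all: by end_near.
Qed.
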